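(* Let $q$ be a prime power, $\chi$ a multiplicative character of $\mathbb{F}_q^*$ and $\lambda$ an additive character of $\mathbb{F}_q$. For every $n\ge 1$, \[ \sum_{g\in GL(n,q)}\chi(\det g)\,\lambda(\operatorname{tr} g) = \begin{cases} |GL(n,q)| & \text{if } \lambda,\chi \text{ are both trivial},\\ 0 & \text{if } \lambda \text{ is trivial and } \chi \text{ nontrivial},\\ q^{\binom n2}\,G(\chi,\lambda)^n & \text{if } \lambda \text{ is nontrivial}.\end{cases}\]
   Context: $GL(n,q)$ is the group of invertible $n\times n$ matrices over $\mathbb{F}_q$. The Gauss sum is $G(\chi,\lambda)=\sum_{x\in\mathbb{F}_q^*}\chi(x)\lambda(x)$. *)

From mathcomp Require Import all_boot all_algebra all_field.
Set Implicit Arguments. Unset Strict Implicit. Unset Printing Implicit Defensive.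
Import GRing.Theory.
Local Open Scope ring_scope.

(* A multiplicative character of F^*, given as a function on F whose value
   at 0 is irrelevant (never used): a group hom F^* -> C^*. *)
Definition is_mult_char (F : finFieldType) (chi : F -> algC) : Prop :=
  chi 1 = 1 /\ forall x y : F, x != 0 -> y != 0 -> chi (x * y) = chi x * chi y.

Definition is_add_char (F : finFieldType) (lam : F -> algC) : Prop :=
  lam 0 = 1 /\ forall x y : F, lam (x + y) = lam x * lam y.

Definition mult_char_trivial (F : finFieldType) (chi : F -> algC) : Prop :=
  forall x : F, x != 0 -> chi x = 1.

Definition add_char_trivial (F : finFieldType) (lam : F -> algC) : Prop :=
  forall x : F, lam x = 1.

Definition gauss_sum (F : finFieldType) (chi lam : F -> algC) : algC :=
  \sum_(x : F | x != 0) chi x * lam x.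

From mathcomp Require Import all_boot all_algebra all_field.
From mathcomp Require Import ring.
Import GRing.Theory.
Set Implicit Arguments. Unset Strict Implicit. Unset Printing Implicit Defensive.
Local Open Scope ring_scope.

(* Extend chi by chi(0) = 0, so that the sum may run over all matrices. For
   g = [[a, b], [c, D]] with a a scalar and D of size n, det g = a det D + det [[0, b], [c, D]]
   and tr g = a + tr D, so the sum over a is an affine change of variables in the Gauss
   sum G: it vanishes when D is singular and otherwise equals
   G chi(det D) lam(tr D) lam(b D^-1 c), by the Schur complement. Summing lam(b D^-1 c)
   over b and c leaves q^n by orthogonality of the additive characters of F^n, so the
   sum gains the factor q^n G from size n to size n+1. When lam is trivial and chi is
   not, multiplying by diag(a, 1, ..., 1) with chi a <> 1 shows that the sum is zero. *)

Lemma scale_invariant_eq0 (R : idomainType) (u s : R) : u != 1 -> s = u * s -> s = 0.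
Proof.
move=> u_neq1 /eqP; rewrite -subr_eq0 -{1}[s]mul1r -mulrBl mulf_eq0 subr_eq0 eq_sym.
by rewrite (negbTE u_neq1) => /eqP.
Qed.

Lemma sum_add_char_eq0 (V : finZmodType) (R : idomainType) (psi : V -> R) (v : V) :
  {morph psi : x y / x + y >-> x * y} -> psi v != 1 -> \sum_x psi x = 0.
Proof.
move=> psiD psiv_neq1; apply: (scale_invariant_eq0 psiv_neq1).
by rewrite {1}(reindex_inj (addrI v)) mulr_sumr; apply: eq_bigr => x _.
Qed.

Lemma sum_mx11 (T : finType) (R : nmodType) (f : T -> R) :
  \sum_(a : 'M[T]_1) f (a 0 0) = \sum_x f x.
Proof.
rewrite (reindex (fun x : T => const_mx x)) /=.
  by apply: eq_bigr => x _; rewrite mxE.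
exists (fun a : 'M[T]_1 => a 0 0) => [x _|a _]; first by rewrite mxE.
by apply/matrixP => i j; rewrite !ord1 mxE.
Qed.

Lemma sum_block_mx (T : finType) (R : nmodType) m n (f : 'M[T]_(m + n) -> R) :
  \sum_g f g = \sum_(D : 'M[T]_n) \sum_(c : 'M[T]_(n, m)) \sum_(b : 'M[T]_(m, n))
                 \sum_(a : 'M[T]_m) f (block_mx a b c D).
Proof.
symmetry.
under eq_bigr => D _ do under eq_bigr => c _ do rewrite pair_bigA.
under eq_bigr => D _ do rewrite pair_bigA.
rewrite pair_bigA (reindex (fun p : 'M_n * ('M_(n, m) * ('M_(m, n) * 'M_m)) =>
   block_mx p.2.2.2 p.2.2.1 p.2.1 p.1)) //=.
exists (fun g => (drsubmx g, (dlsubmx g, (ursubmx g, ulsubmx g)))) => [[D [c [b a]]] _|g _].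
  by rewrite /= block_mxKdr block_mxKdl block_mxKur block_mxKul.
exact: submxK.
Qed.

Lemma det_block_mx1_lin (R : comPzRingType) n (a : 'M[R]_1) (b : 'rV[R]_n)
    (c : 'cV[R]_n) (D : 'M[R]_n) :
  \det (block_mx a b c D) = a 0 0 * \det D + \det (block_mx 0 b c D).
Proof.
have -> : \det D = \det (block_mx (1 : 'M[R]_1) 0 c D) by rewrite det_lblock det1 mul1r.
rewrite -[\det (block_mx 0 b c D)]mul1r.
apply: (determinant_multilinear (i0 := 0)).
- apply/rowP => j; rewrite !mxE split1 unlift_none /= !mxE.
  by case: (@split 1 n j) => k; rewrite ?mxE ?ord1 /= ?mulr1 ?mulr0 ?addr0 ?add0r ?mul1r.
- by apply/matrixP => i j; rewrite !mxE split1 liftK.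
- by apply/matrixP => i j; rewrite !mxE split1 liftK.
Qed.

Lemma det_block_mx0_schur (R : comUnitRingType) n (b : 'rV[R]_n) (c : 'cV[R]_n)
    (D : 'M[R]_n) :
  D \in unitmx -> \det (block_mx 0 b c D) = - (b *m invmx D *m c) 0 0 * \det D.
Proof.
move=> D_unit.
have -> : block_mx 0 b c D =
    block_mx 1 (b *m invmx D) 0 1 *m block_mx (- (b *m invmx D *m c)) 0 c D.
  by rewrite mulmx_block !mul1mx !mul0mx !add0r addNr mulmxKV.
by rewrite det_mulmx det_ublock det_lblock !det1 !mul1r det_mx11 mxE.
Qed.

Definition chi0 (F : finFieldType) (chi : F -> algC) (x : F) : algC :=
  if x == 0 then 0 else chi x.

Lemma gauss_sumE (F : finFieldType) (chi lam : F -> algC) :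
  gauss_sum chi lam = \sum_x chi0 chi x * lam x.
Proof.
rewrite /gauss_sum big_mkcond; apply: eq_bigr => x _.
by rewrite /chi0; case: eqP; rewrite ?mul0r.
Qed.

Lemma sum_unitmx_chi0 (F : finFieldType) n (chi : F -> algC) (f : 'M[F]_n -> algC) :
  \sum_(g | g \in unitmx) chi (\det g) * f g = \sum_g chi0 chi (\det g) * f g.
Proof.
rewrite big_mkcond; apply: eq_bigr => g _.
by rewrite unitmxE unitfE /chi0; case: eqP; rewrite ?mul0r.
Qed.

Lemma sum_unitmx_mult_char_det_eq0 (F : finFieldType) (chi : F -> algC) n :
  is_mult_char chi -> ~ mult_char_trivial chi -> (0 < n)%N ->
  \sum_(g : 'M[F]_n | g \in unitmx) chi (\det g) = 0.
Proof.
move=> [_ chiM] chi_nt n_gt0.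
have [a /andP [a_neq0 chia_neq1]] : exists a, (a != 0) && (chi a != 1).
  apply/existsP; apply: contra_notT chi_nt => /existsPn chi1 x x_neq0.
  by apply/eqP; move: (chi1 x); rewrite x_neq0 negbK.
pose i0 : 'I_n := Ordinal n_gt0.
pose P : 'M[F]_n := diag_mx (\row_i if i == i0 then a else 1).
have detP : \det P = a.
  rewrite det_diag (bigD1 i0) //= big1 => [|i /negbTE i_neq0]; rewrite mxE ?eqxx ?mulr1 //.
  by rewrite i_neq0.
have P_unit : P \in unitmx by rewrite unitmxE detP unitfE.
apply: (scale_invariant_eq0 chia_neq1).
rewrite {1}(reindex_inj (can_inj (mulKmx P_unit))) /= mulr_sumr.
apply: eq_big => [g|g]; first by rewrite unitmx_mul P_unit.
by rewrite unitmx_mul P_unit unitmxE unitfE det_mulmx detP => /= /(chiM _ _ a_neq0)->.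
Qed.

Section MatrixCharacterSum.

Variables (F : finFieldType) (chi lam : F -> algC).
Hypotheses (chi_mult : is_mult_char chi) (lam_add : is_add_char lam).
Variable y : F.
Hypothesis lam_y : lam y != 1.

Lemma sum_lam_mulmx n (b : 'rV[F]_n) :
  \sum_(c : 'cV[F]_n) lam ((b *m c) 0 0) = if b == 0 then (#|F| ^ n)%:R else 0.
Proof.
have [->|/rV0Pn[j bj_neq0]] := eqVneq b 0.
  under eq_bigr do rewrite mul0mx mxE lam_add.1.
  by rewrite sumr_const card_mx muln1.
apply: (@sum_add_char_eq0 _ _ _ ((y / b 0 j) *: delta_mx j 0)).
  by move=> c c'; rewrite mulmxDr mxE lam_add.2.
by rewrite -scalemxAr -colE !mxE divfK.
Qed.

Lemma sum_lam_schur n (D : 'M[F]_n) : D \in unitmx ->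
  \sum_(c : 'cV[F]_n) \sum_(b : 'rV[F]_n) lam ((b *m invmx D *m c) 0 0) = (#|F| ^ n)%:R.
Proof.
move=> D_unit; rewrite exchange_big (reindex_inj (can_inj (mulmxK D_unit))) /=.
under eq_bigr do rewrite mulmxK // sum_lam_mulmx.
by rewrite -big_mkcond big_pred1_eq.
Qed.

Lemma sum_chi0_affine d r s :
  \sum_x chi0 chi (x * d + r) * lam (x + s) =
  if d == 0 then 0 else chi d * lam (s - r / d) * gauss_sum chi lam.
Proof.
have [->|d_neq0] := eqVneq d 0.
  under eq_bigr do rewrite mulr0 add0r lam_add.2.
  by rewrite -mulr_sumr -mulr_suml (sum_add_char_eq0 lam_add.2 lam_y) mul0r mulr0.
rewrite gauss_sumE (reindex_inj (addIr (- (r / d)))) mulr_sumr; apply: eq_bigr => x _.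
rewrite mulrDl mulNr divfK // addrNK addrAC -addrA lam_add.2 /chi0 mulf_eq0 (negbTE d_neq0).
by case: eqP => [_|/eqP x_neq0] /=; [ring | rewrite chi_mult.2 //; ring].
Qed.

Lemma sum_block_mx_corner n (b : 'rV[F]_n) (c : 'cV[F]_n) (D : 'M[F]_n) :
  \sum_(a : 'M[F]_1) chi0 chi (\det (block_mx a b c D)) * lam (\tr (block_mx a b c D)) =
  if D \in unitmx then
    chi (\det D) * lam (\tr D) * gauss_sum chi lam * lam ((b *m invmx D *m c) 0 0)
  else 0.
Proof.
under eq_bigr do rewrite det_block_mx1_lin mxtrace_block trace_mx11.
rewrite (sum_mx11 (fun x => chi0 chi (x * \det D + \det (block_mx 0 b c D)) * lam (x + \tr D))).
rewrite sum_chi0_affine unitmxE unitfE.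
have [//|detD_neq0] := eqVneq (\det D) 0.
rewrite det_block_mx0_schur ?unitmxE ?unitfE // mulfK // opprK lam_add.2; ring.
Qed.

Definition mx_char_sum n := \sum_(g : 'M[F]_n) chi0 chi (\det g) * lam (\tr g).

Lemma mx_char_sumS n :
  mx_char_sum n.+1 = (#|F| ^ n)%:R * gauss_sum chi lam * mx_char_sum n.
Proof.
rewrite /mx_char_sum
  (@sum_block_mx _ _ 1 n (fun g => chi0 chi (\det g) * lam (\tr g))) mulr_sumr.
apply: eq_bigr => D _.
under eq_bigr do under eq_bigr do rewrite sum_block_mx_corner.
have [D_unit|D_sing] := boolP (D \in unitmx); last first.
  rewrite big1 => [|c _]; last by rewrite big1.
  by move: D_sing; rewrite unitmxE unitfE negbK /chi0 => ->; rewrite !mul0r mulr0.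
under eq_bigr do rewrite -mulr_sumr.
rewrite -mulr_sumr sum_lam_schur //.
by move: D_unit; rewrite unitmxE unitfE /chi0 => /negbTE ->; ring.
Qed.

Lemma mx_char_sumE n :
  mx_char_sum n = (#|F| ^ 'C(n, 2))%:R * gauss_sum chi lam ^+ n.
Proof.
elim: n => [|n IHn].
  rewrite /mx_char_sum (eq_bigr (fun _ => 1)) => [|g _].
    by rewrite sumr_const card_mx expr0 mulr1.
  by rewrite /chi0 det_mx00 oner_eq0 chi_mult.1 /mxtrace big_ord0 lam_add.1 mulr1.
rewrite mx_char_sumS IHn binS bin1 exprS expnD natrM; ring.
Qed.

End MatrixCharacterSum.

Theorem theorem1 (F : finFieldType) (chi lam : F -> algC) (n : nat)
  (hchi : is_mult_char chi) (hlam : is_add_char lam) (hn : (0 < n)%N) :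
  let S := \sum_(g : 'M[F]_n | g \in unitmx) chi (\det g) * lam (\tr g) in
  [/\ (add_char_trivial lam -> mult_char_trivial chi ->
         S = (#|[set g : 'M[F]_n | g \in unitmx]|)%:R),
      (add_char_trivial lam -> ~ mult_char_trivial chi -> S = 0) &
      (~ add_char_trivial lam ->
         S = (#|F| ^ 'C(n, 2))%:R * gauss_sum chi lam ^+ n)].
Proof.
move=> S; split.
- move=> lam1 chi1; rewrite /S (eq_bigr (fun _ => 1)) => [|g g_unit].
    by rewrite sumr_const cardsE.
  by rewrite lam1 chi1 ?mulr1 // -unitfE -unitmxE.
- move=> lam1 chi_nt; rewrite /S -[RHS](sum_unitmx_mult_char_det_eq0 hchi chi_nt hn).
  by apply: eq_bigr => g _; rewrite lam1 mulr1.
- move=> lam_nt.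
  have [y lam_y] : exists y, lam y != 1.
    by apply/existsP; apply: contra_notT lam_nt => /existsPn lam1 x; apply/eqP/negPn.
  by rewrite /S sum_unitmx_chi0 -(mx_char_sumE hchi hlam lam_y).
Qed.
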